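(* In the algebra $\mathcal{SL}_{\hbar,q}$ generated by $b,c,g$ with relations $$q^2gb-bg=\hbar(q+q^{-1})b,\quad gc-q^2cg=-\hbar(q+q^{-1})c,\quad (q^2+1)(bc-cb)+(q^2-1)g^2=\hbar(q+q^{-1})g,$$ the matrix $$L=\begin{pmatrix} q[2]_q^{-1}g & b\\ c & -q^{-1}[2]_q^{-1}g\end{pmatrix}$$ satisfies $L^2-q^{-1}\hbar L+\sigma\,\mathrm{id}=0$, where $$\sigma=-[2]_q^{-1}\mathrm{Tr}_RL^2=-[2]_q^{-1}\big([2]_q^{-1}g^2+q^{-1}bc+q\,cb\big)$$ is central in $\mathcal{SL}_{\hbar,q}$. Consequently, in the quotient $\mathcal{SL}_{\hbar,q}/\langle\sigma-\alpha\rangle$ ($\alpha\in\mathbb{K}$ with $q^{-2}\hbar^2-4\alpha\ne0$), with $\mu_{0,1}=(q^{-1}\hbar\mp\sqrt{q^{-2}\hbar^2-4\alpha})/2$ and $e_0=(L-\mu_1)/(\mu_0-\mu_1)$, $e_1=(L-\mu_0)/(\mu_1-\mu_0)$, $$\mathrm{Tr}_Re_0=\frac{[2]_q}{2}+\frac{[2]_q\hbar}{2\sqrt{\hbar^2-4\alpha q^2}},\qquad \mathrm{Tr}_Re_1=\frac{[2]_q}{2}-\frac{[2]_q\hbar}{2\sqrt{\hbar^2-4\alpha q^2}},$$ with $\sqrt{\hbar^2-4\alpha q^2}=q\sqrt{q^{-2}\hbar^2-4\alpha}$.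
   Context: Here $q$ is generic, $\hbar\in\mathbb{K}$, $[m]_q=(q^m-q^{-m})/(q-q^{-1})$, so $[2]_q=q+q^{-1}$. Products of matrices with noncommuting entries are $(MN)_i^{\;j}=\sum_aM_i^{\;a}N_a^{\;j}$ (row index $i$, column index $j$). For a $2\times2$ matrix $M$ with entries in the algebra, $\mathrm{Tr}_RM=q^{-1}M_1^{\;1}+q\,M_2^{\;2}$ (the categorical trace for the Hecke symmetry $R$ with $R(x_1\otimes x_1)=q\,x_1\otimes x_1$, $R(x_2\otimes x_2)=q\,x_2\otimes x_2$, and matrix $\begin{pmatrix}\lambda&1\\1&0\end{pmatrix}$, $\lambda=q-q^{-1}$, on the span of $x_1\otimes x_2,x_2\otimes x_1$). The algebra above is the traceless part $\mathcal{SL}_{\hbar,q}$ of the modified reflection equation algebra for this $R$, with $g=a-d$ where $L=\begin{pmatrix}a&b\\c&d\end{pmatrix}$ and $q^{-1}a+qd=0$. The quotient by $\sigma-\alpha$ is the quantum non-commutative sphere. *)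

From HB Require Import structures.
From mathcomp Require Import all_boot all_order all_algebra.
Set Implicit Arguments. Unset Strict Implicit. Unset Printing Implicit Defensive.
Import GRing.Theory.
Local Open Scope ring_scope.

Section Defs.
Variables (K : fieldType) (A : algType K).

Definition qint2 (q : K) : K := q + q^-1.

Definition mx2 (a b c d : A) : 'M[A]_2 :=
  \matrix_(i < 2, j < 2)
    if (i : nat) == 0%N then (if (j : nat) == 0%N then a else b)
    else (if (j : nat) == 0%N then c else d).

Definition TrR (q : K) (M : 'M[A]_2) : A :=
  q^-1 *: M ord0 ord0 + q *: M ord_max ord_max.

Definition Lmat (q : K) (b c g : A) : 'M[A]_2 :=
  mx2 ((q / qint2 q) *: g) b c (- ((q^-1 / qint2 q) *: g)).

Definition SL_rels (q hbar : K) (b c g : A) : Prop :=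
  [/\ q ^+ 2 *: (g * b) - b * g = (hbar * qint2 q) *: b,
      g * c - q ^+ 2 *: (c * g) = - ((hbar * qint2 q) *: c) &
      (q ^+ 2 + 1) *: (b * c - c * b) + (q ^+ 2 - 1) *: (g * g)
        = (hbar * qint2 q) *: g].

Definition sigmaSL (q : K) (b c g : A) : A :=
  - ((qint2 q)^-1 *: TrR q (Lmat q b c g *m Lmat q b c g)).

End Defs.

(** The relations say that [b] and [c] intertwine [g] with the affine shift
    [h = q^-2 g + q^-2 hbar [2]_q]: [g b = b h] and [c g = h c], while
    [c b = b c - D] with [D] a quadratic polynomial in [g].  For the quadratic
    [Q x = (q/[2]_q)^2 x^2 - (hbar/[2]_q) x] one has [Q h = Q g + D] and
    [sigma = -(Q g + b c)].  Since [Q g b = b Q h] and [c Q g = Q h c], the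
    shift by [D] exactly cancels the one coming from [c b = b c - D], so
    [sigma] commutes with [b] and [c], and obviously with [g].  The quadratic
    relation for [L] is then checked entrywise after moving [g] to the right of
    [b] and [c].  Finally [Tr_R] of [k (L - m)] does not see [g] because
    [q^-1 (q/[2]_q) = q (q^-1/[2]_q)], so the traces of [e0], [e1] are the
    scalars [-k m [2]_q]. *)

From HB Require Import structures.
From mathcomp Require Import all_boot all_order all_algebra.
From mathcomp Require Import ring.

Set Implicit Arguments.
Unset Strict Implicit.
Unset Printing Implicit Defensive.

Import GRing.Theory.
Local Open Scope ring_scope.

Section LinearCombination.
Variables (R : pzRingType) (V : lmodType R).

Definition lincomb (v : seq V) (x : nat -> R) : V :=
  \sum_(i < size v) x i *: v`_i.

Lemma lincombD v x y :
  lincomb v x + lincomb v y = lincomb v (fun i => x i + y i).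
Proof. by rewrite /lincomb -big_split; apply: eq_bigr => i _; rewrite scalerDl. Qed.

Lemma lincombZ v k x : k *: lincomb v x = lincomb v (fun i => k * x i).
Proof. by rewrite /lincomb scaler_sumr; apply: eq_bigr => i _; rewrite scalerA. Qed.

Lemma lincombN v x : - lincomb v x = lincomb v (fun i => - x i).
Proof. by rewrite /lincomb -sumrN; apply: eq_bigr => i _; rewrite scaleNr. Qed.

Lemma lincomb_nth v k :
  (k < size v)%N -> v`_k = lincomb v (fun i => (i == k)%:R).
Proof.
move=> lt_k_v; rewrite /lincomb (bigD1 (Ordinal lt_k_v)) //= eqxx scale1r.
by rewrite big1 ?addr0 // => i /negbTE; rewrite -val_eqE /= => ->; rewrite scale0r.
Qed.

Lemma eq_lincomb v x y : (forall i, x i = y i) -> lincomb v x = lincomb v y.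
Proof. by move=> eq_xy; apply: eq_bigr => i _; rewrite eq_xy. Qed.

Lemma lincomb_eq0 v x : (forall i, x i = 0) -> lincomb v x = 0.
Proof. by move=> x0; apply: big1 => i _; rewrite x0 scale0r. Qed.

End LinearCombination.

Ltac expand_scalings :=
  repeat (rewrite -?scalerAl -?scalerAr;
          rewrite ?(mul1r, mulr1, mulrDl, mulrDr, mulrBl, mulrBr, mulNr, mulrN,
                    mulr_algl, mulr_algr, scalerDr, scalerBr, scalerN, scalerA,
                    opprD, opprK, opprB)).

Ltac fold_words v ws k :=
  lazymatch ws with
  | [::] => idtac
  | ?w :: ?ws' =>
      try rewrite -[w]/(v`_k) (@lincomb_nth _ _ v k erefl); fold_words v ws' k.+1
  end.

Ltac split_coefficients ws :=
  lazymatch ws with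
  | [::] => intros ?
  | _ :: ?ws' => let i := fresh "i" in
      intros [|i]; [idtac | revert i; split_coefficients ws']
  end.

(* Reduces an identity between scalar combinations of the words [ws] of an
   algebra to one scalar identity per word (plus a trivial one for the indices
   past [ws]).  Matching coefficients is sufficient whether or not the words
   are independent.  A word must come before the words that are its subterms,
   e.g. [g * g] before [g]. *)
Ltac compare_coefficients ws :=
  expand_scalings;
  let v := fresh "v" in pose v := ws;
  fold_words v ws 0%N;
  repeat first [rewrite lincombZ | rewrite lincombN | rewrite lincombD];
  first [apply: lincomb_eq0 | apply: eq_lincomb];
  split_coefficients ws; rewrite /=.

Section Quadratic.
Variables (R : pzRingType) (A : algType R).

Definition quad (alpha beta : R) (x : A) : A := alpha *: (x * x) + beta *: x.

Lemma quad_intertwine_l alpha beta (x y b : A) :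
  x * b = b * y -> quad alpha beta x * b = b * quad alpha beta y.
Proof.
move=> xb; rewrite /quad mulrDl mulrDr -!scalerAl -!scalerAr.
by rewrite -mulrA xb mulrA xb -mulrA.
Qed.

Lemma quad_intertwine_r alpha beta (x y c : A) :
  c * x = y * c -> c * quad alpha beta x = quad alpha beta y * c.
Proof.
move=> cx; rewrite /quad mulrDl mulrDr -!scalerAl -!scalerAr.
by rewrite mulrA cx -mulrA cx mulrA.
Qed.

Lemma commr_quad alpha beta (x : A) : GRing.comm (quad alpha beta x) x.
Proof. exact: quad_intertwine_l. Qed.

End Quadratic.

Lemma commr_casimir (R : pzRingType) (b c g h X D : R) :
  g * b = b * h -> c * g = h * c -> c * b = b * c - D ->
  X * b = b * (X + D) -> c * X = (X + D) * c -> GRing.comm X g ->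
  [/\ GRing.comm (X + b * c) b, GRing.comm (X + b * c) c
    & GRing.comm (X + b * c) g].
Proof.
move=> gb cg cb Xb cX Xg; split; rewrite /GRing.comm.
- rewrite mulrDl mulrDr Xb -mulrA cb mulrDr mulrBr mulrA.
  by rewrite addrACA subrr addr0.
- rewrite mulrDr mulrDl cX mulrA cb mulrDl mulrBl -mulrA.
  by rewrite addrACA subrr addr0.
- by rewrite mulrDl mulrDr Xg -mulrA cg mulrA -gb mulrA.
Qed.

Lemma sqr_add1_qint2 (K : fieldType) (q : K) :
  q != 0 -> q ^+ 2 + 1 = q * qint2 q.
Proof. by move=> q_neq0; rewrite /qint2 mulrDr mulfV // expr2. Qed.

Lemma qint2_neq0 (K : fieldType) (q : K) :
  q != 0 -> q ^+ 4 != 1 -> qint2 q != 0.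
Proof.
move=> q_neq0; apply: contraNN => /eqP qint2_eq0.
have : q ^+ 2 + 1 == 0 by rewrite sqr_add1_qint2 // qint2_eq0 mulr0.
by rewrite addr_eq0 => /eqP sqr_q; rewrite (exprM q 2 2) sqr_q sqrrN expr1n.
Qed.

Section SLhq.
Variables (K : fieldType) (A : algType K) (q hbar : K) (b c g : A).
Hypotheses (q_neq0 : q != 0) (qint2q_neq0 : qint2 q != 0).
Hypothesis rels : SL_rels q hbar b c g.

Let sqr_add1_neq0 : q * q + 1 != 0.
Proof. by rewrite -expr2 sqr_add1_qint2 // mulf_neq0. Qed.

Local Ltac field_qint2 := rewrite /qint2; field; rewrite ?q_neq0 ?sqr_add1_neq0.

Lemma sigmaSL_E :
  sigmaSL q b c g = - ((qint2 q)^-1 *: ((qint2 q)^-1 *: (g * g)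
                       + q^-1 *: (b * c) + q *: (c * b))).
Proof.
rewrite /sigmaSL /TrR !mxE !big_ord_recr !big_ord0 /= !add0r /Lmat /mx2 !mxE /=.
by compare_coefficients [:: g * g; b * c; c * b]; field_qint2.
Qed.

Lemma TrR_Lmat_shift (k m : K) :
  TrR q (k%:A *: (Lmat q b c g - (m%:A)%:M)) = (- (k * m * qint2 q))%:A.
Proof.
rewrite /TrR /Lmat /mx2 !mxE /=.
by compare_coefficients [:: g; 1 : A]; field_qint2.
Qed.

Let h := q^-2 *: g + (q^-2 * (hbar * qint2 q))%:A.
Let D := (q ^+ 2 + 1)^-1 *: ((hbar * qint2 q) *: g - (q ^+ 2 - 1) *: (g * g)).
Let Q : A -> A := quad ((q / qint2 q) ^+ 2) (- (hbar / qint2 q)).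

Let scale_sqr_q_inj : injective ( *:%R (q ^+ 2) : A -> A).
Proof. exact/scalerI/expf_neq0. Qed.

Lemma mulgb_SL : g * b = b * h.
Proof.
have [gb _ _] := rels; apply: scale_sqr_q_inj.
rewrite -[q ^+ 2 *: (g * b)](subrK (b * g)) gb.
by compare_coefficients [:: b * g; b]; field.
Qed.

Lemma mulcg_SL : c * g = h * c.
Proof.
have [_ cg _] := rels; apply: scale_sqr_q_inj.
rewrite -[q ^+ 2 *: (c * g)](subKr (g * c)) cg.
by compare_coefficients [:: g * c; c]; field.
Qed.

Lemma mulcb_SL : c * b = b * c - D.
Proof.
have [_ _ cb] := rels.
by rewrite /D -cb addrK scalerA mulVf ?scale1r ?subKr // sqr_add1_qint2 ?mulf_neq0.
Qed.

Lemma quad_shift_SL : Q h = Q g + D.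
Proof.
by rewrite /Q /quad /h /D; compare_coefficients [:: g * g; g; 1 : A]; field_qint2.
Qed.

Lemma sigmaSL_casimir : sigmaSL q b c g = - (Q g + b * c).
Proof.
rewrite sigmaSL_E mulcb_SL /Q /quad /D.
by compare_coefficients [:: g * g; b * c; g]; field_qint2.
Qed.

Lemma sigmaSL_central :
  let sigma := sigmaSL q b c g in
  [/\ GRing.comm sigma b, GRing.comm sigma c & GRing.comm sigma g].
Proof.
have Qb : Q g * b = b * (Q g + D).
  by rewrite -quad_shift_SL; apply/quad_intertwine_l/mulgb_SL.
have cQ : c * Q g = (Q g + D) * c.
  by rewrite -quad_shift_SL; apply/quad_intertwine_r/mulcg_SL.
have [] := commr_casimir mulgb_SL mulcg_SL mulcb_SL Qb cQ (commr_quad _ _ g).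
by rewrite /= sigmaSL_casimir; split; apply/commr_sym/commrN/commr_sym.
Qed.

Lemma Lmat_quadratic :
  let L := Lmat q b c g in
  L *m L - (q^-1 * hbar)%:A *: L + (sigmaSL q b c g)%:M = 0.
Proof.
apply/matrixP => -[[|[|//]] ?] -[[|[|//]] ?].
all: rewrite !mxE !big_ord_recr !big_ord0 /= add0r /Lmat /mx2 !mxE /=.
all: rewrite ?mulr1n ?mulr0n ?addr0 ?sigmaSL_casimir /Q /quad.
all: expand_scalings; rewrite ?mulgb_SL ?mulcg_SL ?mulcb_SL /h /D.
all: by compare_coefficients [:: g * g; b * c; b * g; g * c; g; b; c];
  field_qint2.
Qed.

End SLhq.

Theorem mainTheorem8 (K : fieldType) (A : algType K)
    (q hbar : K) (b c g : A) :
  [pchar K] =i pred0 ->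
  q != 0 ->
  (forall n : nat, (0 < n)%N -> q ^+ n != 1) ->
  SL_rels q hbar b c g ->
  let L := Lmat q b c g in
  let sigma := sigmaSL q b c g in
  [/\ L *m L - ((q^-1 * hbar)%:A) *: L + sigma%:M = 0,
      sigma = - ((qint2 q)^-1 *: ((qint2 q)^-1 *: (g * g)
                   + q^-1 *: (b * c) + q *: (c * b))),
      sigma * b = b * sigma /\ sigma * c = c * sigma /\ sigma * g = g * sigma &
      forall (alpha s : K),
        s ^+ 2 = q^-2 * hbar ^+ 2 - 4%:R * alpha ->
        s != 0 ->
        sigma = alpha%:A ->
        let mu0 := (q^-1 * hbar - s) / 2%:R in
        let mu1 := (q^-1 * hbar + s) / 2%:R in
        let e0 := ((mu0 - mu1)^-1)%:A *: (L - (mu1%:A)%:M) in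
        let e1 := ((mu1 - mu0)^-1)%:A *: (L - (mu0%:A)%:M) in
        TrR q e0 = (qint2 q / 2%:R + qint2 q * hbar / (2%:R * (q * s)))%:A /\
        TrR q e1 = (qint2 q / 2%:R - qint2 q * hbar / (2%:R * (q * s)))%:A].
Proof.
move=> char0 q_neq0 q_not_root rels L sigma.
have qint2q_neq0 : qint2 q != 0 by apply: qint2_neq0; last exact: q_not_root.
have two_neq0 : 2%:R != 0 :> K by move: (char0 2); rewrite !inE /= => /negbT.
have [sigma_b sigma_c sigma_g] := sigmaSL_central q_neq0 qint2q_neq0 rels.
split; [exact: Lmat_quadratic | exact: sigmaSL_E | by [] |].
(* The traces only need [s != 0]; the other two hypotheses make [mu0] and
   [mu1] the roots of the quadratic relation of [L]. *)
move=> alpha s _ s_neq0 _ mu0 mu1 e0 e1.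
have mu01 : mu0 - mu1 = - s by rewrite /mu0 /mu1; field; rewrite two_neq0.
have mu10 : mu1 - mu0 = s by rewrite /mu0 /mu1; field; rewrite two_neq0.
rewrite /e0 /e1 !TrR_Lmat_shift // mu01 mu10 /mu0 /mu1.
by split; congr (_ *: 1); field; rewrite ?oppr_eq0 ?q_neq0 ?s_neq0 ?two_neq0.
Qed.
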